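(* Let $\mu<\lambda$ be infinite cardinals with $\mu^{<\mu}=\mu$ and $\lambda$ regular. If $p,q\in\mathbb P(\lambda,\mu)$ coincide on $[\operatorname{dom}p\cap\operatorname{dom}q]^2$, then $p$ and $q$ are compatible in $\mathbb P(\lambda,\mu)$, i.e. there is $s\in\mathbb P(\lambda,\mu)$ with $p\cup q\subseteq s$.
   Context: Let $3$ denote the three-element set of symbols $\{\ge,\perp,u\}$. For a set $w$ of ordinals, $[w]^2=\{(i,j): i<j,\ i,j\in w\}$. A valuation function is a map $p:[w]^2\to 3$ (with domain $w$, written $\operatorname{dom}p$) such that: (1) if $i<j<k$ in $w$, $p(i,j)={\ge}$ and $p(j,k)={\ge}$, then $p(i,k)={\ge}$; (2) if $i<j<k$ in $w$ and $\{p(i,j),p(i,k)\}=\{\perp,\ge\}$ then $p(j,k)={\perp}$; and if $i<j<k$, $p(i,j)={\perp}$, $p(j,k)={\ge}$, then $p(i,k)={\perp}$. $\mathbb P(\lambda,\mu)$ is the set of valuation functions whose domain is a subset of $\lambda$ of cardinality less than $\mu$, ordered by reverse inclusion (so $s$ is stronger than $p$ iff $s\supseteq p$). *)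

(* plain Rocq types model cardinals as initial well-ordered types. *)
From Stdlib Require Import Classical FunctionalExtensionality.

Definition inj_le (A B : Type) : Prop :=
  exists f : A -> B, forall x y, f x = f y -> x = y.

Definition card_lt (A B : Type) : Prop := inj_le A B /\ ~ inj_le B A.

Definition strict_well_order {T : Type} (lt : T -> T -> Prop) : Prop :=
  (forall x, ~ lt x x) /\
  (forall x y z, lt x y -> lt y z -> lt x z) /\
  (forall x y, lt x y \/ x = y \/ lt y x) /\
  well_founded lt.

Definition is_cardinal {T : Type} (lt : T -> T -> Prop) : Prop :=
  strict_well_order lt /\ forall a : T, card_lt {b : T | lt b a} T.

Definition is_infinite (T : Type) : Prop := inj_le nat T.

Definition is_regular {T : Type} (lt : T -> T -> Prop) : Prop :=
  forall X : T -> Prop, (forall a, exists b, X b /\ lt a b) -> inj_le T {x : T | X x}.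

(* mu^{<mu} <= mu, i.e. | U_{alpha < mu} mu^alpha | <= mu
   (the reverse inequality is trivial, so this is mu^{<mu} = mu). *)
Definition pow_lt_self {M : Type} (lt : M -> M -> Prop) : Prop :=
  inj_le {a : M & ({b : M | lt b a} -> M)} M.

Inductive sym : Type := Ge | Perp | U.

(* p : [w]^2 -> 3 is a valuation function (values of p outside [w]^2 are irrelevant). *)
Definition valuation {L : Type} (lt : L -> L -> Prop) (w : L -> Prop)
    (p : L -> L -> sym) : Prop :=
  forall i j k, w i -> w j -> w k -> lt i j -> lt j k ->
    (p i j = Ge -> p j k = Ge -> p i k = Ge) /\
    (((p i j = Perp /\ p i k = Ge) \/ (p i j = Ge /\ p i k = Perp)) -> p j k = Perp) /\
    (p i j = Perp -> p j k = Ge -> p i k = Perp).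

Definition inP {L M : Type} (ltL : L -> L -> Prop) (w : L -> Prop)
    (p : L -> L -> sym) : Prop :=
  valuation ltL w p /\ card_lt {x : L | w x} M.

Definition extends {L : Type} (ltL : L -> L -> Prop) (w : L -> Prop) (p : L -> L -> sym)
    (ws : L -> Prop) (s : L -> L -> sym) : Prop :=
  (forall i, w i -> ws i) /\
  (forall i j, w i -> w j -> ltL i j -> s i j = p i j).

From Stdlib Require Import Classical ClassicalEpsilon FunctionalExtensionality ProofIrrelevance Eqdep.

(* Glue p and q along D = dom p ∩ dom q: s is p on pairs from dom p, q on pairs from dom q, and a
   crossing pair i < k (one point only in dom p, the other only in dom q) gets ≥ if i ≥ d ≥ k for
   some d ∈ D between them, ⊥ if some d ∈ D forces ⊥ by rule (2) or (3), and u otherwise.  A common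
   point forcing ≥ and one forcing ⊥ would contradict the rules for p and q, and every closure
   condition for s on a triple meeting both dom p \ dom q and dom q \ dom p is a short chain of
   closure conditions for p and q through common points.
   The domain of s is small: dom p and dom q inject into one initial segment S of μ, and
   μ^{<μ} = μ injects 2^(S + S) into μ, so μ ≤ S + S would contradict Cantor's theorem. *)

Definition valuation_triple {L : Type} (r : L -> L -> sym) (i j k : L) : Prop :=
  (r i j = Ge -> r j k = Ge -> r i k = Ge) /\
  (((r i j = Perp /\ r i k = Ge) \/ (r i j = Ge /\ r i k = Perp)) -> r j k = Perp) /\
  (r i j = Perp -> r j k = Ge -> r i k = Perp).

Section ValuationRules.
Context {L : Type} {lt : L -> L -> Prop} {w : L -> Prop} {r : L -> L -> sym}.
Hypothesis V : valuation lt w r.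

Lemma valuation_Ge_trans a b c : w a -> w b -> w c -> lt a b -> lt b c ->
  r a b = Ge -> r b c = Ge -> r a c = Ge.
Proof. intros; apply (V a b c); auto. Qed.

Lemma valuation_Perp_GePerp a b c : w a -> w b -> w c -> lt a b -> lt b c ->
  r a b = Ge -> r a c = Perp -> r b c = Perp.
Proof. intros; apply (V a b c); auto. Qed.

Lemma valuation_Perp_PerpGe a b c : w a -> w b -> w c -> lt a b -> lt b c ->
  r a b = Perp -> r a c = Ge -> r b c = Perp.
Proof. intros; apply (V a b c); auto. Qed.

Lemma valuation_Perp_trans a b c : w a -> w b -> w c -> lt a b -> lt b c ->
  r a b = Perp -> r b c = Ge -> r a c = Perp.
Proof. intros; apply (V a b c); auto. Qed.

End ValuationRules.

Lemma valuation_ext {L : Type} (lt : L -> L -> Prop) (w : L -> Prop) (r r' : L -> L -> sym) :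
  (forall x y z, lt x y -> lt y z -> lt x z) ->
  (forall i j, w i -> w j -> lt i j -> r i j = r' i j) ->
  valuation lt w r -> valuation lt w r'.
Proof.
  intros lt_trans E V i j k Hi Hj Hk Hij Hjk.
  rewrite <- (E i j), <- (E j k), <- (E i k) by eauto.
  exact (V i j k Hi Hj Hk Hij Hjk).
Qed.

Section Amalgamation.
Variables (L : Type) (lt : L -> L -> Prop) (r : L -> L -> sym) (D : L -> Prop).

Inductive ge_witness (i k : L) : Prop :=
  | GeW_between d : D d -> lt i d -> lt d k -> r i d = Ge -> r d k = Ge -> ge_witness i k.

Inductive perp_witness (i k : L) : Prop :=
  | PerpW_below_GePerp d : D d -> lt d i -> r d i = Ge -> r d k = Perp -> perp_witness i k
  | PerpW_below_PerpGe d : D d -> lt d i -> r d i = Perp -> r d k = Ge -> perp_witness i k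
  | PerpW_between d : D d -> lt i d -> lt d k -> r i d = Perp -> r d k = Ge -> perp_witness i k.

Definition cross_value (i k : L) : sym :=
  if excluded_middle_informative (ge_witness i k) then Ge
  else if excluded_middle_informative (perp_witness i k) then Perp
  else U.

Definition glued (S1 S2 : L -> Prop) (i k : L) : sym :=
  if excluded_middle_informative ((S1 i /\ S1 k) \/ (S2 i /\ S2 k)) then r i k
  else cross_value i k.

Lemma cross_value_Ge i k : cross_value i k = Ge <-> ge_witness i k.
Proof.
  unfold cross_value.
  repeat destruct excluded_middle_informative; split; congruence || tauto.
Qed.

Lemma cross_value_Perp i k :
  ~ (ge_witness i k /\ perp_witness i k) -> (cross_value i k = Perp <-> perp_witness i k).
Proof.
  unfold cross_value.
  repeat destruct excluded_middle_informative; split; congruence || tauto.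
Qed.

Lemma glued_same S1 S2 i k : (S1 i /\ S1 k) \/ (S2 i /\ S2 k) -> glued S1 S2 i k = r i k.
Proof. unfold glued; destruct excluded_middle_informative; tauto. Qed.

Lemma glued_cross S1 S2 i k :
  ~ ((S1 i /\ S1 k) \/ (S2 i /\ S2 k)) -> glued S1 S2 i k = cross_value i k.
Proof. unfold glued; destruct excluded_middle_informative; tauto. Qed.

Lemma glued_comm S1 S2 i k : glued S1 S2 i k = glued S2 S1 i k.
Proof. unfold glued; do 2 destruct excluded_middle_informative; tauto. Qed.

Hypothesis lt_trans : forall x y z, lt x y -> lt y z -> lt x z.
Hypothesis lt_total : forall x y, lt x y \/ x = y \/ lt y x.

Ltac ge_trans V a b c :=
  assert (r a c = Ge) by (apply (valuation_Ge_trans V a b c); eauto).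
Ltac perp_ge_perp V a b c :=
  assert (r b c = Perp) by (apply (valuation_Perp_GePerp V a b c); eauto).
Ltac perp_perp_ge V a b c :=
  assert (r b c = Perp) by (apply (valuation_Perp_PerpGe V a b c); eauto).
Ltac perp_trans V a b c :=
  assert (r a c = Perp) by (apply (valuation_Perp_trans V a b c); eauto).
Ltac compare a b := destruct (lt_total a b) as [? | [<- | ?]]; [| congruence |].

Section Exclusive.
Variables Sa Sb : L -> Prop.
Hypotheses (Va : valuation lt Sa r) (Vb : valuation lt Sb r).
Hypotheses (D_Sa : forall x, D x -> Sa x) (D_Sb : forall x, D x -> Sb x).
#[local] Hint Resolve D_Sa D_Sb : core.

Lemma witnesses_exclusive i k : Sa i -> Sb k -> lt i k ->
  ge_witness i k -> perp_witness i k -> False.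
Proof.
  intros Hi Hk Hik [d ? ? ? ? ?] [e ? ? ? ? | e ? ? ? ? | e ? ? ? ? ?].
  - ge_trans Va e i d. ge_trans Vb e d k. congruence.
  - perp_trans Va e i d. perp_perp_ge Vb e d k. congruence.
  - compare d e.
    + perp_ge_perp Va i d e. perp_perp_ge Vb d e k. congruence.
    + perp_perp_ge Va i e d. perp_perp_ge Vb e d k. congruence.
Qed.

End Exclusive.

Section Configurations.
Variables S1 S2 : L -> Prop.
Hypotheses (V1 : valuation lt S1 r) (V2 : valuation lt S2 r).
Hypotheses (D_S1 : forall x, D x -> S1 x) (D_S2 : forall x, D x -> S2 x).
Hypothesis S12_D : forall x, S1 x -> S2 x -> D x.
#[local] Hint Resolve D_S1 D_S2 S12_D : core.
Local Notation s := (glued S1 S2).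
Local Notation crossing i k :=
  ((S1 i /\ ~ S2 i /\ S2 k /\ ~ S1 k) \/ (S2 i /\ ~ S1 i /\ S1 k /\ ~ S2 k)).

Lemma glued_Ge i k : lt i k -> crossing i k -> (s i k = Ge <-> ge_witness i k).
Proof. intros. rewrite glued_cross by tauto. apply cross_value_Ge. Qed.

Lemma glued_Perp i k : lt i k -> crossing i k -> (s i k = Perp <-> perp_witness i k).
Proof.
  intros Hik Hc. rewrite glued_cross by tauto. apply cross_value_Perp.
  intros [HG HP]. destruct Hc as [(? & ? & ? & ?) | (? & ? & ? & ?)].
  - apply (witnesses_exclusive S1 S2 V1 V2 D_S1 D_S2 i k); auto.
  - apply (witnesses_exclusive S2 S1 V2 V1 D_S2 D_S1 i k); auto.
Qed.

Lemma glued_triple_within i j k :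
  (S1 i /\ S1 j /\ S1 k) \/ (S2 i /\ S2 j /\ S2 k) -> lt i j -> lt j k ->
  valuation_triple s i j k.
Proof.
  intros Hw Hij Hjk. unfold valuation_triple.
  rewrite !glued_same by tauto.
  destruct Hw as [(? & ? & ?) | (? & ? & ?)]; [apply V1 | apply V2]; auto.
Qed.

Ltac unglue := unfold valuation_triple;
  repeat first
    [ rewrite glued_Ge by (eauto || tauto)
    | rewrite glued_Perp by (eauto || tauto)
    | rewrite glued_same by tauto ].

(* In [glued_triple_xyz] the letters locate i, j, k: 1 in S1 \ S2, 2 in S2 \ S1, D in S1 ∩ S2. *)
Lemma glued_triple_121 i j k :
  S1 i -> ~ S2 i -> S2 j -> ~ S1 j -> S1 k -> ~ S2 k -> lt i j -> lt j k ->
  valuation_triple s i j k.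
Proof.
  intros Hi Hi' Hj Hj' Hk Hk' Hij Hjk. unglue.
  split; [| split].
  - intros [d1 ? ? ? ? ?] [d2 ? ? ? ? ?].
    ge_trans V2 d1 j d2. ge_trans V1 i d1 d2. ge_trans V1 i d2 k. assumption.
  - intros [[[e ? ? ? ? | e ? ? ? ? | e ? ? ? ? ?] ?] | [[d ? ? ? ? ?] ?]].
    + ge_trans V1 e i k. apply PerpW_below_PerpGe with e; eauto.
    + perp_trans V1 e i k. apply PerpW_below_GePerp with e; eauto.
    + perp_perp_ge V1 i e k. apply PerpW_below_GePerp with e; eauto.
    + perp_ge_perp V1 i d k. apply PerpW_below_GePerp with d; eauto.
  - intros [e ? ? ? ? | e ? ? ? ? | e ? ? ? ? ?] [d ? ? ? ? ?].
    + perp_trans V2 e j d. perp_ge_perp V1 e i d. perp_trans V1 i d k. assumption.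
    + ge_trans V2 e j d. perp_perp_ge V1 e i d. perp_trans V1 i d k. assumption.
    + ge_trans V2 e j d. perp_trans V1 i e d. perp_trans V1 i d k. assumption.
Qed.


Lemma glued_triple_122 i j k :
  S1 i -> ~ S2 i -> S2 j -> ~ S1 j -> S2 k -> ~ S1 k -> lt i j -> lt j k ->
  valuation_triple s i j k.
Proof.
  intros Hi Hi' Hj Hj' Hk Hk' Hij Hjk. unglue.
  split; [| split].
  - intros [d ? ? ? ? ?] ?.
    ge_trans V2 d j k. apply GeW_between with d; eauto.
  - intros [[[e ? ? ? ? | e ? ? ? ? | e ? ? ? ? ?] [d ? ? ? ? ?]]
          | [[d ? ? ? ? ?] [e ? ? ? ? | e ? ? ? ? | e ? ? ? ? ?]]].
    + ge_trans V1 e i d. ge_trans V2 e d k. perp_perp_ge V2 e j k. assumption.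
    + perp_trans V1 e i d. perp_trans V2 e d k. perp_ge_perp V2 e j k. assumption.
    + compare d e.
      * perp_ge_perp V1 i d e. perp_trans V2 d e j. perp_perp_ge V2 d j k. assumption.
      * perp_perp_ge V1 i e d. perp_trans V2 e d k. perp_ge_perp V2 e j k. assumption.
    + ge_trans V1 e i d. ge_trans V2 e d j. perp_ge_perp V2 e j k. assumption.
    + perp_trans V1 e i d. perp_trans V2 e d j. perp_perp_ge V2 e j k. assumption.
    + compare d e.
      * perp_ge_perp V1 i d e. compare e j.
        -- perp_perp_ge V2 d e j. perp_perp_ge V2 e j k. assumption.
        -- perp_ge_perp V2 d j e. perp_trans V2 j e k. assumption.
      * perp_perp_ge V1 i e d. perp_trans V2 e d j. perp_perp_ge V2 e j k. assumption.
  - intros [e ? ? ? ? | e ? ? ? ? | e ? ? ? ? ?] ?.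
    + perp_trans V2 e j k. apply PerpW_below_GePerp with e; eauto.
    + ge_trans V2 e j k. apply PerpW_below_PerpGe with e; eauto.
    + ge_trans V2 e j k. apply PerpW_between with e; eauto.
Qed.

Lemma glued_triple_112 i j k :
  S1 i -> ~ S2 i -> S1 j -> ~ S2 j -> S2 k -> ~ S1 k -> lt i j -> lt j k ->
  valuation_triple s i j k.
Proof.
  intros Hi Hi' Hj Hj' Hk Hk' Hij Hjk. unglue.
  split; [| split].
  - intros ? [d ? ? ? ? ?].
    ge_trans V1 i j d. apply GeW_between with d; eauto.
  - intros [[? [d ? ? ? ? ?]] | [? [e ? ? ? ? | e ? ? ? ? | e ? ? ? ? ?]]].
    + compare d j.
      * perp_ge_perp V1 i d j. apply PerpW_below_PerpGe with d; eauto.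
      * perp_perp_ge V1 i j d. apply PerpW_between with d; eauto.
    + ge_trans V1 e i j. apply PerpW_below_GePerp with e; eauto.
    + perp_trans V1 e i j. apply PerpW_below_PerpGe with e; eauto.
    + compare e j.
      * perp_perp_ge V1 i e j. apply PerpW_below_PerpGe with e; eauto.
      * perp_ge_perp V1 i j e. apply PerpW_between with e; eauto.
  - intros ? [d ? ? ? ? ?].
    perp_trans V1 i j d. apply PerpW_between with d; eauto.
Qed.

Lemma glued_triple_12D i j k :
  S1 i -> ~ S2 i -> S2 j -> ~ S1 j -> S1 k -> S2 k -> lt i j -> lt j k ->
  valuation_triple s i j k.
Proof.
  intros Hi Hi' Hj Hj' Hk Hk' Hij Hjk. unglue.
  split; [| split].
  - intros [d ? ? ? ? ?] ?.
    ge_trans V2 d j k. ge_trans V1 i d k. assumption.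
  - intros [[[e ? ? ? ? | e ? ? ? ? | e ? ? ? ? ?] ?] | [[d ? ? ? ? ?] ?]].
    + ge_trans V1 e i k. perp_perp_ge V2 e j k. assumption.
    + perp_trans V1 e i k. perp_ge_perp V2 e j k. assumption.
    + perp_perp_ge V1 i e k. perp_ge_perp V2 e j k. assumption.
    + perp_ge_perp V1 i d k. perp_ge_perp V2 d j k. assumption.
  - intros [e ? ? ? ? | e ? ? ? ? | e ? ? ? ? ?] ?.
    + perp_trans V2 e j k. perp_ge_perp V1 e i k. assumption.
    + ge_trans V2 e j k. perp_perp_ge V1 e i k. assumption.
    + ge_trans V2 e j k. perp_trans V1 i e k. assumption.
Qed.

Lemma glued_triple_1D2 i j k :
  S1 i -> ~ S2 i -> S1 j -> S2 j -> S2 k -> ~ S1 k -> lt i j -> lt j k ->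
  valuation_triple s i j k.
Proof.
  intros Hi Hi' Hj Hj' Hk Hk' Hij Hjk. unglue.
  split; [| split].
  - intros. apply GeW_between with j; eauto.
  - intros [[? [d ? ? ? ? ?]] | [? [e ? ? ? ? | e ? ? ? ? | e ? ? ? ? ?]]].
    + compare d j.
      * perp_ge_perp V1 i d j. perp_perp_ge V2 d j k. assumption.
      * perp_perp_ge V1 i j d. perp_trans V2 j d k. assumption.
    + ge_trans V1 e i j. perp_ge_perp V2 e j k. assumption.
    + perp_trans V1 e i j. perp_perp_ge V2 e j k. assumption.
    + compare e j.
      * perp_perp_ge V1 i e j. perp_perp_ge V2 e j k. assumption.
      * perp_ge_perp V1 i j e. perp_trans V2 j e k. assumption.
  - intros. apply PerpW_between with j; eauto.
Qed.

Lemma glued_triple_D12 i j k :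
  S1 i -> S2 i -> S1 j -> ~ S2 j -> S2 k -> ~ S1 k -> lt i j -> lt j k ->
  valuation_triple s i j k.
Proof.
  intros Hi Hi' Hj Hj' Hk Hk' Hij Hjk. unglue.
  split; [| split].
  - intros ? [d ? ? ? ? ?].
    ge_trans V1 i j d. ge_trans V2 i d k. assumption.
  - intros [[? ?] | [? ?]].
    + apply PerpW_below_PerpGe with i; auto.
    + apply PerpW_below_GePerp with i; auto.
  - intros ? [d ? ? ? ? ?].
    perp_trans V1 i j d. perp_trans V2 i d k. assumption.
Qed.

End Configurations.

(* As [glued S1 S2 = glued S2 S1], every mixed triple is one of the six configurations above,
   possibly with S1 and S2 exchanged. *)
Ltac configuration S1 S2 := first
  [ solve [eapply (glued_triple_121 S1 S2); eassumption]
  | solve [eapply (glued_triple_122 S1 S2); eassumption]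
  | solve [eapply (glued_triple_112 S1 S2); eassumption]
  | solve [eapply (glued_triple_12D S1 S2); eassumption]
  | solve [eapply (glued_triple_1D2 S1 S2); eassumption]
  | solve [eapply (glued_triple_D12 S1 S2); eassumption] ].

Lemma glued_valuation (S1 S2 : L -> Prop) :
  valuation lt S1 r -> valuation lt S2 r ->
  (forall x, D x -> S1 x) -> (forall x, D x -> S2 x) -> (forall x, S1 x -> S2 x -> D x) ->
  valuation lt (fun x => S1 x \/ S2 x) (glued S1 S2).
Proof.
  intros V1 V2 D_S1 D_S2 S12_D i j k Hi Hj Hk Hij Hjk.
  assert (S21_D : forall x, S2 x -> S1 x -> D x) by auto.
  assert (mirror : valuation_triple (glued S2 S1) i j k -> valuation_triple (glued S1 S2) i j k)
    by (unfold valuation_triple; rewrite !(glued_comm S2 S1); auto).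
  change (valuation_triple (glued S1 S2) i j k).
  destruct (classic (S1 i)), (classic (S2 i)), (classic (S1 j)), (classic (S2 j)),
    (classic (S1 k)), (classic (S2 k)); try solve [exfalso; tauto].
  all: first
    [ solve [eapply (glued_triple_within S1 S2); try eassumption; tauto]
    | configuration S1 S2
    | apply mirror; configuration S2 S1 ].
Qed.

End Amalgamation.

Definition segment {M : Type} (lt : M -> M -> Prop) (a : M) : Type := {b : M | lt b a}.

Lemma inj_le_trans (A B C : Type) : inj_le A B -> inj_le B C -> inj_le A C.
Proof. intros [f Hf] [g Hg]. exists (fun x => g (f x)); auto. Qed.

Lemma inj_le_bool_fun (Z : Type) : inj_le Z (Z -> bool).
Proof.
  exists (fun z t => if excluded_middle_informative (t = z) then true else false).
  intros x y E. pose proof (f_equal (fun F => F y) E) as Ey; simpl in Ey.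
  do 2 destruct excluded_middle_informative; congruence.
Qed.

Lemma cantor (Z : Type) : ~ inj_le (Z -> bool) Z.
Proof.
  intros [f Hf].
  set (diag z := if excluded_middle_informative (exists phi, f phi = z /\ phi z = false)
                 then true else false).
  destruct (diag (f diag)) eqn:E; pose proof E as Ediag; unfold diag at 1 in E;
    destruct excluded_middle_informative as [[phi [Hphi Hz]] | H]; try discriminate.
  - apply Hf in Hphi. subst. congruence.
  - apply H. eauto.
Qed.

Lemma inj_le_sum (A A' B B' : Type) : inj_le A A' -> inj_le B B' -> inj_le (A + B) (A' + B').
Proof.
  intros [f Hf] [g Hg].
  exists (fun x => match x with inl a => inl (f a) | inr b => inr (g b) end).
  intros [a1 | b1] [a2 | b2] E; inversion E; f_equal; auto.
Qed.

Lemma inj_le_union (A : Type) (P Q : A -> Prop) :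
  inj_le {x | P x \/ Q x} ({x | P x} + {x | Q x}).
Proof.
  exists (fun u => match excluded_middle_informative (P (proj1_sig u)) with
    | left h => inl (exist _ _ h)
    | right h => inr (exist _ (proj1_sig u) (or_ind (fun h' => False_ind _ (h h')) id (proj2_sig u)))
    end).
  intros [x hx] [y hy]; simpl.
  do 2 destruct excluded_middle_informative; intro E; inversion E; subst;
    f_equal; apply proof_irrelevance.
Qed.

Section GreedyInjection.
Variables (M Z : Type) (lt : M -> M -> Prop).
Hypothesis lt_wf : well_founded lt.
Hypothesis lt_total : forall x y, lt x y \/ x = y \/ lt y x.

Definition greedy_step (a : M) (prev : forall b, lt b a -> option Z) : option Z :=
  match excluded_middle_informative (exists z, forall b (h : lt b a), prev b h <> Some z) with
  | left H => Some (proj1_sig (constructive_indefinite_description _ H))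
  | right _ => None
  end.

Definition greedy : M -> option Z := Fix lt_wf (fun _ => option Z) greedy_step.

Lemma greedy_eq a : greedy a = greedy_step a (fun b _ => greedy b).
Proof.
  apply (Fix_eq lt_wf (fun _ => option Z) greedy_step).
  intros x f f' E. unfold greedy_step.
  replace f' with f; [reflexivity |].
  do 2 (apply functional_extensionality_dep; intro); auto.
Qed.

Lemma greedy_fresh a z : greedy a = Some z -> forall b, lt b a -> greedy b <> Some z.
Proof.
  rewrite greedy_eq. unfold greedy_step.
  destruct excluded_middle_informative as [H | H]; [| discriminate].
  destruct (constructive_indefinite_description _ H) as [z' Hz']; simpl.
  intros E; injection E as <-. exact Hz'.
Qed.

Lemma greedy_exhausted a : greedy a = None -> forall z, exists b, lt b a /\ greedy b = Some z.
Proof.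
  rewrite greedy_eq. unfold greedy_step.
  destruct excluded_middle_informative as [H | H]; [discriminate |].
  intros _ z. apply NNPP. intro C. apply H. exists z. intros b h E. apply C. eauto.
Qed.

(* If the greedy enumeration never stops it injects M into Z; otherwise it has exhausted Z
   below the first stopping point. *)
Lemma segment_inj_le : ~ inj_le M Z -> exists a, inj_le Z (segment lt a).
Proof.
  intro NMZ.
  destruct (classic (exists a, greedy a = None)) as [[a Ha] | Hn].
  - exists a.
    assert (F : forall z, {b | lt b a /\ greedy b = Some z})
      by (intro z; apply constructive_indefinite_description, greedy_exhausted; auto).
    exists (fun z => exist _ (proj1_sig (F z)) (proj1 (proj2_sig (F z)))).
    intros x y E. injection E as E.
    pose proof (proj2 (proj2_sig (F x))) as Hx. pose proof (proj2 (proj2_sig (F y))) as Hy.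
    rewrite E in Hx. congruence.
  - exfalso. apply NMZ.
    assert (F : forall a, {z | greedy a = Some z}).
    { intro a. apply constructive_indefinite_description.
      destruct (greedy a) eqn:E; eauto. exfalso; eauto. }
    exists (fun a => proj1_sig (F a)).
    intros x y E. pose proof (proj2_sig (F x)) as Hx. pose proof (proj2_sig (F y)) as Hy.
    simpl in *. rewrite E in Hx.
    destruct (lt_total x y) as [h | [h | h]]; auto.
    + exfalso; exact (greedy_fresh y _ Hy x h Hx).
    + exfalso; exact (greedy_fresh x _ Hx y h Hy).
Qed.

End GreedyInjection.

Section SmallSets.
Variables (M : Type) (ltM : M -> M -> Prop).
Hypothesis HM : strict_well_order ltM.
Hypothesis HMinf : is_infinite M.
Hypothesis Hpow : pow_lt_self ltM.

Lemma segment_mono a b : ltM a b -> inj_le (segment ltM a) (segment ltM b).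
Proof.
  destruct HM as [_ [lt_trans _]]. intro Hab.
  exists (fun x => exist _ (proj1_sig x) (lt_trans _ _ _ (proj2_sig x) Hab)).
  intros [x hx] [y hy] E. injection E as ->. f_equal; apply proof_irrelevance.
Qed.

(* A map [S + S -> bool] is coded as a map [S -> M] with values among four distinct
   elements of M, and [mu^{<mu} = mu] codes those by elements of M. *)
Lemma inj_le_segment_sum_pred c : inj_le (segment ltM c + segment ltM c -> bool) M.
Proof.
  destruct HMinf as [e He], Hpow as [h Hh].
  set (code (b1 b2 : bool) := e ((if b1 then 2 else 0) + (if b2 then 1 else 0))).
  assert (code_inj : forall a b a' b', code a b = code a' b' -> a = a' /\ b = b')
    by (intros [] [] [] [] E; apply He in E; easy).
  exists (fun phi => h (existT _ c (fun t => code (phi (inl t)) (phi (inr t))))).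
  intros phi psi E. apply Hh, inj_pair2 in E.
  apply functional_extensionality. intros [t | t];
    apply (f_equal (fun F => F t)), code_inj in E; tauto.
Qed.

Lemma card_lt_of_inj_le_segment_sum (X : Type) c :
  inj_le X (segment ltM c + segment ltM c) -> card_lt X M.
Proof.
  intro HX. split.
  - eapply inj_le_trans; [exact HX |].
    eapply inj_le_trans; [apply inj_le_bool_fun | apply inj_le_segment_sum_pred].
  - intro HMX. apply (cantor (segment ltM c + segment ltM c)).
    eapply inj_le_trans; [apply inj_le_segment_sum_pred |].
    eapply inj_le_trans; eassumption.
Qed.

Lemma card_lt_union (A : Type) (P Q : A -> Prop) :
  card_lt {x | P x} M -> card_lt {x | Q x} M -> card_lt {x | P x \/ Q x} M.
Proof.
  intros [_ HP] [_ HQ].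
  destruct HM as [_ [_ [lt_total lt_wf]]].
  destruct (segment_inj_le M _ ltM lt_wf lt_total HP) as [a Ha].
  destruct (segment_inj_le M _ ltM lt_wf lt_total HQ) as [b Hb].
  assert (Hc : exists c, inj_le {x | P x} (segment ltM c) /\ inj_le {x | Q x} (segment ltM c)).
  { destruct (lt_total a b) as [h | [<- | h]].
    - exists b. split; [eapply inj_le_trans; [exact Ha | apply segment_mono] |]; auto.
    - exists a. auto.
    - exists a. split; [| eapply inj_le_trans; [exact Hb | apply segment_mono]]; auto. }
  destruct Hc as [c [HPc HQc]].
  apply card_lt_of_inj_le_segment_sum with c.
  eapply inj_le_trans; [apply inj_le_union | apply inj_le_sum; assumption].
Qed.

End SmallSets.

Theorem proposition4p4
  (L : Type) (ltL : L -> L -> Prop) (M : Type) (ltM : M -> M -> Prop)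
  (HL : is_cardinal ltL) (HM : is_cardinal ltM)
  (HMinf : is_infinite M) (HML : card_lt M L)
  (Hpow : pow_lt_self ltM) (Hreg : is_regular ltL)
  (wp wq : L -> Prop) (p q : L -> L -> sym)
  (Hp : @inP L M ltL wp p) (Hq : @inP L M ltL wq q)
  (Hagree : forall i j, wp i -> wq i -> wp j -> wq j -> ltL i j -> p i j = q i j) :
  exists (ws : L -> Prop) (s : L -> L -> sym),
    @inP L M ltL ws s /\ extends ltL wp p ws s /\ extends ltL wq q ws s.
Proof.
  destruct HL as [[_ [lt_trans [lt_total _]]] _].
  destruct Hp as [Vp Cp], Hq as [Vq Cq].
  set (r i j := if excluded_middle_informative (wp i /\ wp j) then p i j else q i j).
  assert (r_p : forall i j, wp i -> wp j -> r i j = p i j).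
  { intros i j Hi Hj. unfold r. destruct excluded_middle_informative; tauto. }
  assert (r_q : forall i j, wq i -> wq j -> ltL i j -> r i j = q i j).
  { intros i j Hi Hj Hij. unfold r. destruct excluded_middle_informative as [[] |]; auto. }
  exists (fun x => wp x \/ wq x), (glued L ltL r (fun x => wp x /\ wq x) wp wq).
  split; [split | split; split].
  - apply glued_valuation; try tauto.
    + apply (valuation_ext ltL wp p r lt_trans); auto using eq_sym.
    + apply (valuation_ext ltL wq q r lt_trans); auto using eq_sym.
  - exact (card_lt_union M ltM (proj1 HM) HMinf Hpow L wp wq Cp Cq).
  - tauto.
  - intros i j Hi Hj _. rewrite glued_same; auto.
  - tauto.
  - intros i j Hi Hj Hij. rewrite glued_same; auto.
Qed.
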